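(* Let $d\in\mathbb N$, $\alpha\in\mathbb R_+^d$, and let $D\subset\mathbb R_+^d$ be a nonempty convex compact set. Then $$\inf_{x\in[0,1]^d}\max_{y\in D}\frac{y^\top x}{\alpha^\top x}=\max_{y\in D}\min_{i\in[d]}\frac{y_i}{\alpha_i}.$$ Moreover, the same equality holds with $\inf_{x\in[0,1]^d}$ replaced by $\inf_{x\in\mathbb R_+^d}$.
   Context: Every ratio whose denominator equals zero is defined to be $+\infty$; this applies both to $\frac{y^\top x}{\alpha^\top x}$ when $\alpha^\top x=0$ and to $\frac{y_i}{\alpha_i}$ when $\alpha_i=0$. *)

From HB Require Import structures.
From mathcomp Require Import all_boot all_order all_algebra.
From mathcomp Require Import all_classical all_reals all_analysis.
Set Implicit Arguments. Unset Strict Implicit. Unset Printing Implicit Defensive.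
Import Order.TTheory GRing.Theory Num.Theory numFieldNormedType.Exports.
Local Open Scope classical_set_scope.
Local Open Scope ring_scope.

Definition dotv (R : realType) (d : nat) (u v : 'rV[R]_d) : R :=
  \sum_(i < d) u 0 i * v 0 i.

Definition eratio (R : realType) (a b : R) : \bar R :=
  if b == 0 then +oo%E else (a / b)%:E.

Definition nonneg_vec (R : realType) (d : nat) (v : 'rV[R]_d) : Prop :=
  forall i, 0 <= v 0 i.

Definition unit_box (R : realType) (d : nat) : set 'rV[R]_d :=
  [set x | forall i, 0 <= x 0 i <= 1].

Definition convex_set_rV (R : realType) (d : nat) (D : set 'rV[R]_d) : Prop :=
  forall x y, D x -> D y -> forall t : R, 0 <= t <= 1 ->
    D (t *: x + (1 - t) *: y).

Definition inner_max (R : realType) (d : nat) (D : set 'rV[R]_d)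
    (alpha x : 'rV[R]_d) : \bar R :=
  ereal_sup [set eratio (dotv y x) (dotv alpha x) | y in D].

Definition rhs_value (R : realType) (d : nat) (D : set 'rV[R]_d)
    (alpha : 'rV[R]_d) : \bar R :=
  ereal_sup [set ereal_inf [set eratio (y 0 i) (alpha 0 i) | i in [set: 'I_d]]
            | y in D].

From HB Require Import structures.
From mathcomp Require Import all_boot all_order all_algebra.
From mathcomp Require Import all_classical all_reals all_analysis.
From mathcomp Require Import ring lra.
Import Order.TTheory GRing.Theory Num.Theory numFieldNormedType.Exports.
Local Open Scope classical_set_scope.
Local Open Scope ring_scope.
Set Implicit Arguments. Unset Strict Implicit.

(* If m is the minimal ratio y_i / alpha_i then y >= m alpha, hence y^T x >= m alpha^T x
   for every x >= 0: this is the lower bound.  Conversely, if t exceeds the right-hand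
   side, no y in D dominates t alpha, i.e. the compact convex set D misses the cone
   t alpha + R_+^d.  A minimiser y0 over D of the squared distance ||(t alpha - y)^+||^2
   to that cone yields the separating direction x = (t alpha - y0)^+ >= 0, with
   y^T x < t alpha^T x on D.  The ratios are invariant under scaling x, so x may be
   taken in the unit box, and the infimum over the box is at most t. *)

Section Ratios.
Variable R : realType.
Local Open Scope ereal_scope.

Lemma lee_of_fin_le (a b : \bar R) :
  (forall t : R, t%:E <= a -> t%:E <= b) -> a <= b.
Proof.
move=> h; case: a h => [r | | ] h; [exact: h | | exact: leNye].
case: b h => [r | | ] h //; last by have := h 0%R (leey _).
by have := h (r + 1)%R (leey _); rewrite lee_fin gerDl ler10.
Qed.

Lemma lee_fin_of_gt (a : \bar R) (r : R) :
  (forall t : R, (r < t)%R -> a <= t%:E) -> a <= r%:E.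
Proof.
move=> h; apply/lee_addgt0Pr => e e0; rewrite -EFinD; apply: h; lra.
Qed.

Lemma eratioZ (c a b : R) : (0 < c)%R -> eratio (c * a) (c * b) = eratio a b.
Proof.
move=> c0; rewrite /eratio mulf_eq0 gt_eqF //=.
by case: eqP => // _; rewrite invfM mulrACA divff ?gt_eqF ?mul1r.
Qed.

End Ratios.

Section Orthant.
Variables (R : realType) (d : nat).
Implicit Types (alpha x y z : 'rV[R]_d).

Lemma dotvZr y x (c : R) : dotv y (c *: x) = c * dotv y x.
Proof. by rewrite /dotv mulr_sumr; apply: eq_bigr => i _; rewrite mxE; ring. Qed.

Lemma dotvZl y x (c : R) : dotv (c *: y) x = c * dotv y x.
Proof. by rewrite /dotv mulr_sumr; apply: eq_bigr => i _; rewrite mxE; ring. Qed.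

Lemma dotv_ge0 y x : nonneg_vec y -> nonneg_vec x -> 0 <= dotv y x.
Proof. by move=> hy hx; apply: sumr_ge0 => i _; apply: mulr_ge0. Qed.

Lemma dotv_le y z x : nonneg_vec x -> (forall i, y 0 i <= z 0 i) ->
  dotv y x <= dotv z x.
Proof. by move=> hx hyz; apply: ler_sum => i _; apply: ler_wpM2r. Qed.

Lemma nonneg_vec_scale_unit_box x :
  nonneg_vec x -> exists2 c : R, 0 < c & unit_box (c *: x).
Proof.
move=> hx; have sum0 : 0 <= \sum_i x 0 i by apply: sumr_ge0.
have S0 : 0 < 1 + \sum_i x 0 i by lra.
exists (1 + \sum_i x 0 i)^-1; first by rewrite invr_gt0.
move=> i; rewrite mxE mulr_ge0 ?invr_ge0 ?(ltW S0) //=.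
rewrite mulrC ler_pdivrMr // mul1r (bigD1 i) //=.
have : 0 <= \sum_(j < d | j != i) x 0 j by apply: sumr_ge0.
lra.
Qed.

Definition min_ratio alpha y : \bar R :=
  ereal_inf [set eratio (y 0 i) (alpha 0 i) | i in [set: 'I_d]].

Lemma fin_le_min_ratioP alpha y (t : R) :
  nonneg_vec alpha -> nonneg_vec y ->
  (t%:E <= min_ratio alpha y)%E <-> forall i, t * alpha 0 i <= y 0 i.
Proof.
move=> ha hy; split => [tm i | hty].
- have [->|ai] := eqVneq (alpha 0 i) 0; first by rewrite mulr0.
  have ai0 : 0 < alpha 0 i by rewrite lt_neqAle eq_sym ai ha.
  have : (min_ratio alpha y <= eratio (y 0%R i) (alpha 0%R i))%E.
    by apply: ereal_inf_lbound; exists i.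
  move/(le_trans tm); rewrite /eratio (negbTE ai) lee_fin.
  by rewrite ler_pdivlMr.
- apply: le_ereal_inf_tmp => _ [i _ <-]; rewrite /eratio.
  case: eqP => ai; first exact: leey.
  have ai0 : 0 < alpha 0 i by rewrite lt_neqAle eq_sym ha andbT; apply/eqP.
  by rewrite lee_fin ler_pdivlMr.
Qed.

Lemma min_ratio_ge0 alpha y :
  nonneg_vec alpha -> nonneg_vec y -> (0 <= min_ratio alpha y)%E.
Proof. by move=> ha hy; apply/fin_le_min_ratioP => // i; rewrite mul0r. Qed.

Lemma min_ratio_le_eratio alpha y x :
  nonneg_vec alpha -> nonneg_vec y -> nonneg_vec x ->
  (min_ratio alpha y <= eratio (dotv y x) (dotv alpha x))%E.
Proof.
move=> ha hy hx; apply: lee_of_fin_le => t /(fin_le_min_ratioP _ ha hy) tm.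
rewrite /eratio; case: eqP => ax; first exact: leey.
have ax0 : 0 < dotv alpha x by rewrite lt_neqAle eq_sym dotv_ge0 // andbT; apply/eqP.
rewrite lee_fin ler_pdivlMr // -dotvZl.
by apply: dotv_le => // i; rewrite mxE.
Qed.

Lemma inner_maxZ (D : set 'rV[R]_d) alpha x (c : R) :
  0 < c -> inner_max D alpha (c *: x) = inner_max D alpha x.
Proof.
move=> c0; rewrite /inner_max; congr ereal_sup; apply: eq_imagel => y _.
by rewrite !dotvZr eratioZ.
Qed.

End Orthant.

Section Separation.
Variables (R : realType) (d : nat).
Implicit Types (a y : 'rV[R]_d).

Lemma max0_subr_sqr_le (u h s : R) :
  Num.max 0 (u - s * h) ^+ 2 <=
  Num.max 0 u ^+ 2 - 2 * s * h * Num.max 0 u + s ^+ 2 * h ^+ 2.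
Proof.
rewrite !maxr_absE !sub0r !normrN.
by case: (ger0P u) => hu; case: (ger0P (u - s * h)) => hb; nra.
Qed.

Lemma le0_of_quadratic_bound (c K : R) : 0 <= K ->
  (forall s, 0 < s -> s <= 1 -> 2 * s * c <= s ^+ 2 * K) -> c <= 0.
Proof.
move=> K0 H; rewrite leNgt; apply/negP => c0.
pose s := Num.min 1 (c / (K + 1)).
have s0 : 0 < s by rewrite lt_min ltr01 divr_gt0 // ltr_wpDl.
have s1 : s <= 1 by rewrite ge_min lexx.
have sK : s * (K + 1) <= c by rewrite -ler_pdivlMr ?ltr_wpDl // ge_min lexx orbT.
by have := H s s0 s1; nra.
Qed.

Definition shortfall a y : 'rV[R]_d := \row_i Num.max 0 (a 0 i - y 0 i).

Definition shortfall_sq a y : R := \sum_i shortfall a y 0 i ^+ 2.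

Lemma continuous_shortfall_sq a : continuous (shortfall_sq a).
Proof.
have -> : shortfall_sq a =
    fun y => \sum_i Num.max 0 (a 0 i - y 0 i) * Num.max 0 (a 0 i - y 0 i).
  by apply: funext => y; apply: eq_bigr => i _; rewrite mxE expr2.
apply: (@continuous_big _ _ +%R 0 xpredT add_continuous) => i _ y.
have hg : {for y, continuous (fun z : 'rV[R]_d => Num.max 0 (a 0 i - z 0 i))}.
  apply: (@continuous_max R _ (fun _ => 0)); first exact: cst_continuous.
  apply: (@continuousB R R^o); first exact: cst_continuous.
  exact: coord_continuous.
exact: (continuousM hg hg).
Qed.

Lemma shortfall_ge0 a y : nonneg_vec (shortfall a y).
Proof. by move=> i; rewrite mxE le_max lexx. Qed.

Lemma dotv_shortfall a y :
  dotv y (shortfall a y) = dotv a (shortfall a y) - shortfall_sq a y.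
Proof.
rewrite /dotv /shortfall_sq -sumrB; apply: eq_bigr => i _; rewrite mxE.
by rewrite maxr_absE sub0r normrN; case: (ger0P (a 0 i - y 0 i)) => h; field.
Qed.

Variables (D : set 'rV[R]_d) (a y0 : 'rV[R]_d).
Hypotheses (cD : convex_set_rV D) (y0D : D y0)
  (y0_min : forall y, D y -> shortfall_sq a y0 <= shortfall_sq a y).

(* Moving from y0 towards y by s changes shortfall_sq by at most
   -2 s x^T (y - y0) + O(s^2), and minimality of y0 forbids a decrease. *)
Lemma shortfall_min_variational y :
  D y -> dotv y (shortfall a y0) <= dotv y0 (shortfall a y0).
Proof.
move=> yD; set x := shortfall a y0; rewrite -subr_le0.
have -> : dotv y x - dotv y0 x = \sum_i x 0 i * (y 0 i - y0 0 i).
  by rewrite /dotv -sumrB; apply: eq_bigr => i _; ring.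
apply: (@le0_of_quadratic_bound _ (\sum_i (y 0 i - y0 0 i) ^+ 2)).
  by apply: sumr_ge0 => i _; apply: sqr_ge0.
move=> s s0 s1.
have ysD : D (s *: y + (1 - s) *: y0) by apply: cD => //; rewrite ltW.
have step : shortfall_sq a (s *: y + (1 - s) *: y0) <= \sum_i (x 0 i ^+ 2 -
    2 * s * (y 0 i - y0 0 i) * x 0 i + s ^+ 2 * (y 0 i - y0 0 i) ^+ 2).
  apply: ler_sum => i _; rewrite !mxE.
  have -> : a 0 i - (s * y 0 i + (1 - s) * y0 0 i) =
    (a 0 i - y0 0 i) - s * (y 0 i - y0 0 i) by ring.
  exact: max0_subr_sqr_le.
have := y0_min ysD; move: step.
rewrite big_split sumrB /= -mulr_sumr.
have -> : \sum_i 2 * s * (y 0 i - y0 0 i) * x 0 i =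
   2 * s * \sum_i x 0 i * (y 0 i - y0 0 i).
  by rewrite mulr_sumr; apply: eq_bigr => i _; ring.
rewrite /shortfall_sq -/x; lra.
Qed.

End Separation.

Lemma exists_nonneg_separator (R : realType) d (D : set 'rV[R]_d) (a : 'rV[R]_d) :
  D !=set0 -> convex_set_rV D -> compact D ->
  (forall y, D y -> exists i, y 0 i < a 0 i) ->
  exists2 x, nonneg_vec x & forall y, D y -> dotv y x < dotv a x.
Proof.
move=> D0 cD kD hD.
have [y0 y0D y0_min] := @compact_EVT_min _ R (shortfall_sq a) D D0 kD
  (continuous_subspaceT (@continuous_shortfall_sq R d a)).
rewrite inE in y0D.
have {}y0_min y : D y -> shortfall_sq a y0 <= shortfall_sq a y.
  by move=> yD; apply: y0_min; rewrite inE.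
exists (shortfall a y0); first exact: shortfall_ge0.
have sq_gt0 : 0 < shortfall_sq a y0.
  have [i hi] := hD y0 y0D.
  rewrite /shortfall_sq (bigD1 i) //= ltr_pwDl //; last first.
    by apply: sumr_ge0 => j _; apply: sqr_ge0.
  by rewrite mxE exprn_gt0 // lt_max subr_gt0 hi orbT.
move=> y yD; have := shortfall_min_variational cD y0D y0_min yD.
rewrite dotv_shortfall; lra.
Qed.

Lemma rhs_value_le_inner_max (R : realType) d (D : set 'rV[R]_d) alpha x :
  nonneg_vec alpha -> (forall y, D y -> nonneg_vec y) -> nonneg_vec x ->
  (rhs_value D alpha <= inner_max D alpha x)%E.
Proof.
move=> ha hD hx; apply: ge_ereal_sup => _ [y yD <-].
apply: le_trans (min_ratio_le_eratio ha (hD y yD) hx) _.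
by apply: ereal_sup_ubound; exists y.
Qed.

Lemma unit_box_inf_le_rhs_value (R : realType) d (alpha : 'rV[R]_d) D :
  nonneg_vec alpha -> D !=set0 -> convex_set_rV D -> compact D ->
  (forall y, D y -> nonneg_vec y) ->
  (ereal_inf [set inner_max D alpha x | x in @unit_box R d]
     <= rhs_value D alpha)%E.
Proof.
move=> ha [y1 y1D] cD kD hD.
have le_rhs y : D y -> (min_ratio alpha y <= rhs_value D alpha)%E.
  by move=> yD; apply: ereal_sup_ubound; exists y.
have := le_trans (min_ratio_ge0 ha (hD _ y1D)) (le_rhs _ y1D).
case Erhs: (rhs_value D alpha) => [r | | ] // _; last exact: leey.
apply: lee_fin_of_gt => t rt.
have below y : D y -> exists i, y 0 i < (t *: alpha) 0 i.
  move=> yD; apply: contrapT => hn.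
  have tm : (t%:E <= min_ratio alpha y)%E.
    apply/fin_le_min_ratioP => // [|i]; first exact: hD.
    by rewrite leNgt; apply/negP => hi; apply: hn; exists i; rewrite mxE.
  by have := le_trans tm (le_rhs y yD); rewrite Erhs lee_fin; lra.
have [x hx sep] := exists_nonneg_separator (ex_intro _ y1 y1D) cD kD below.
have [c c0 cx] := nonneg_vec_scale_unit_box hx.
apply: le_trans (ereal_inf_lbound _) _; first by exists (c *: x).
rewrite inner_maxZ //; apply: ge_ereal_sup => _ [y yD <-].
have := sep y yD; rewrite dotvZl => yx_lt.
have ax0 : 0 < dotv alpha x.
  rewrite lt_neqAle dotv_ge0 // andbT eq_sym; apply/eqP => ax0.
  by move: yx_lt; rewrite ax0 mulr0 ltNge dotv_ge0 //; exact: hD.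
by rewrite /eratio gt_eqF // lee_fin ler_pdivrMr // ltW.
Qed.

Theorem mainTheorem4 (R : realType) (d : nat) (alpha : 'rV[R]_d)
    (D : set 'rV[R]_d) :
  nonneg_vec alpha ->
  D !=set0 -> convex_set_rV D -> compact D ->
  (forall y, D y -> nonneg_vec y) ->
  ereal_inf [set inner_max D alpha x | x in @unit_box R d] = rhs_value D alpha /\
  ereal_inf [set inner_max D alpha x | x in [set x | nonneg_vec x]]
    = rhs_value D alpha.
Proof.
move=> ha D0 cD kD hD.
have box_le := unit_box_inf_le_rhs_value ha D0 cD kD hD.
have orthant_le_box :
    (ereal_inf [set inner_max D alpha x | x in [set x | nonneg_vec x]]
     <= ereal_inf [set inner_max D alpha x | x in @unit_box R d])%E.
  apply: ereal_inf_le_tmp => _ [x hx <-]; exists x => //= i.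
  by have /andP[] := hx i.
have rhs_le : (rhs_value D alpha <=
    ereal_inf [set inner_max D alpha x | x in [set x | nonneg_vec x]])%E.
  by apply: le_ereal_inf_tmp => _ [x hx <-]; apply: rhs_value_le_inner_max.
split; apply/eqP; rewrite eq_le ?box_le ?rhs_le.
- by rewrite (le_trans rhs_le orthant_le_box).
- by rewrite (le_trans orthant_le_box box_le).
Qed.
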